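(* Let $K,T\subset\mathbb{R}^n$ be convex bodies and let $q=(q_1,\dots,q_m)$ be a closed $(K,T)$-Minkowski billiard trajectory with respect to the $K$-supporting hyperplanes $H_1,\dots,H_m$. Let $U$ be the inclusion-minimal linear subspace of $\mathbb{R}^n$ containing the outer unit normal vectors $n_K(q_1),\dots,n_K(q_m)$ normal to $H_1,\dots,H_m$, let $W=U^\perp$, and let $H_j^+$ be the closed half-space bounded by $H_j$ containing $K$. Then $H_j=(H_j\cap U)\oplus W$ and $H_j^+=(H_j^+\cap U)\oplus W$ for all $j$, the set $\bigcap_{j=1}^m(H_j^+\cap U)$ is nearly bounded in $U$, and $\bigcap_{j=1}^m H_j^+$ is nearly bounded in $\mathbb{R}^n$. If moreover $T$ is smooth, then $U$ coincides with the convex cone spanned by $n_K(q_1),\dots,n_K(q_m)$ and $\bigcap_{j=1}^m(H_j^+\cap U)$ is bounded in $U$ (and $\bigcap_{j=1}^mH_j^+$ is nearly bounded in $\mathbb{R}^n$).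
   Context: A convex body is a compact convex set in $\mathbb{R}^n$ containing the origin in its interior; it is smooth if through each boundary point there is a unique supporting hyperplane. For a convex set $C$ and $z\in\partial C$, $N_C(z)=\{v:\langle v,y-z\rangle\le 0\ \forall y\in C\}$. A subset $A$ of a linear space $U$ is nearly bounded in $U$ if it lies between two parallel affine hyperplanes of $U$. A closed polygonal curve $(q_1,\dots,q_m)$, $m\ge2$, always satisfies $q_j\ne q_{j+1}$ and $q_j\notin[q_{j-1},q_{j+1}]$ (indices mod $m$). A closed polygonal curve $q$ with vertices on $\partial K$ is a closed $(K,T)$-Minkowski billiard trajectory with respect to the $K$-supporting hyperplanes $H_1,\dots,H_m$ through $q_1,\dots,q_m$ if there are $p_1,\dots,p_m\in\partial T$, outer unit normals $n_K(q_j)\in N_K(q_j)$ normal to $H_j$, and $\mu_j\ge 0$ with $q_{j+1}-q_j\in N_T(p_j)$ and $p_{j+1}-p_j=-\mu_{j+1}n_K(q_{j+1})$ for all $j$. *)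

From HB Require Import structures.
From mathcomp Require Import all_boot all_order all_algebra.
From mathcomp Require Import all_classical all_reals all_analysis.
Set Implicit Arguments. Unset Strict Implicit. Unset Printing Implicit Defensive.
Import Order.TTheory GRing.Theory Num.Theory.
Import numFieldNormedType.Exports.
Local Open Scope classical_set_scope.
Local Open Scope ring_scope.

Section Defs.
Context {R : realType} {n : nat}.
Notation V := 'rV[R]_n.

Definition dot (u v : V) : R := \sum_(i < n) u 0 i * v 0 i.

Definition convex_set (C : set V) : Prop :=
  forall x y t, C x -> C y -> 0 <= t -> t <= 1 -> C (t *: x + (1 - t) *: y).

Definition convex_body (K : set V) : Prop :=
  [/\ compact K, convex_set K & (interior K) 0].

Definition bd (C : set V) : set V := closure C `\` interior C.

Definition normal_cone (C : set V) (z : V) : set V :=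
  [set v | forall y, C y -> dot v (y - z) <= 0].

Definition supporting_hyperplane (C : set V) (z : V) (H : set V) : Prop :=
  exists v : V, [/\ v != 0, H = [set x | dot v x = dot v z]
                  & forall y, C y -> dot v y <= dot v z].

Definition smooth_body (C : set V) : Prop :=
  forall z, bd C z -> forall H1 H2,
    supporting_hyperplane C z H1 -> supporting_hyperplane C z H2 -> H1 = H2.

Definition segment (a b : V) : set V :=
  [set t *: a + (1 - t) *: b | t in [set t : R | 0 <= t <= 1]].

Definition closed_polygonal_curve (m : nat) (q : 'I_m -> V) : Prop :=
  (2 <= m)%N /\
  forall j : 'I_m, q j != q (ordS j) /\ ~ segment (q (ord_pred j)) (q (ordS j)) (q j).

Definition outer_unit_normal_to (K : set V) (z : V) (H : set V) (v : V) : Prop :=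
  [/\ dot v v = 1, normal_cone K z v & H = [set x | dot v (x - z) = 0]].

Definition minkowski_billiard_trajectory (K T : set V) (m : nat)
    (q : 'I_m -> V) (H : 'I_m -> set V) : Prop :=
  [/\ closed_polygonal_curve q,
      forall j, bd K (q j),
      forall j, supporting_hyperplane K (q j) (H j) &
      exists (p : 'I_m -> V) (nK : 'I_m -> V) (mu : 'I_m -> R),
        forall j : 'I_m,
          [/\ bd T (p j),
              outer_unit_normal_to K (q j) (H j) (nK j),
              0 <= mu j,
              normal_cone T (p j) (q (ordS j) - q j) &
              p (ordS j) - p j = - (mu (ordS j) *: nK (ordS j))]].

Definition span_of (m : nat) (v : 'I_m -> V) : set V :=
  [set \sum_(j < m) c j *: v j | c in [set: 'I_m -> R]].

Definition cone_of (m : nat) (v : 'I_m -> V) : set V :=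
  [set \sum_(j < m) c j *: v j | c in [set c : 'I_m -> R | forall j, 0 <= c j]].

Definition orth_compl (U : set V) : set V :=
  [set w | forall u, U u -> dot w u = 0].

Definition mink_sum (A B : set V) : set V := [set a + b | a in A & b in B].

Definition nearly_bounded_in (U A : set V) : Prop :=
  A `<=` U /\
  exists a : V, exists c1 c2 : R,
    [/\ U a, a != 0 & forall x, A x -> c1 <= dot a x <= c2].

Definition bounded_in (U A : set V) : Prop :=
  A `<=` U /\ exists M : R, forall x, A x -> dot x x <= M.

End Defs.

From HB Require Import structures.
From mathcomp Require Import all_boot all_order all_algebra.
From mathcomp Require Import all_classical all_reals all_analysis.
From mathcomp Require Import ring lra.
Import Order.TTheory GRing.Theory Num.Theory.
Import numFieldNormedType.Exports.
Local Open Scope classical_set_scope.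
Local Open Scope ring_scope.

Set Implicit Arguments.
Unset Strict Implicit.

(* Summing the reflection law p_(j+1) - p_j = - mu_(j+1) n_(j+1) around the
   closed trajectory gives sum_j mu_j n_j = 0 with all mu_j >= 0.  Some mu_j
   is positive: otherwise p is constant and the positive numbers
   <q_(j+1) - q_j, p_j> telescope to 0.  If T is smooth, every mu_j is
   positive: mu_j = 0 makes q_(j+1) - q_j and q_j - q_(j-1) normals of T at
   the same point, hence positively collinear, so q_j would lie on the
   segment [q_(j-1), q_(j+1)].
   On the intersection of the half-spaces <n_i, x - q_i> <= 0 the balance
   bounds <n_j, x> from below whenever mu_j > 0, which is near boundedness;
   if all mu_j > 0 every <n_i, x> is bounded, hence so is x within U, and U
   is the cone spanned by the n_j.  The splittings along U (+) W come from
   the orthogonal projection onto U. *)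

Section InnerProduct.
Context {R : realType} {n : nat}.
Implicit Types (u v w x : 'rV[R]_n) (a : R).

Lemma dotC u v : dot u v = dot v u.
Proof. by apply: eq_bigr => i _; rewrite mulrC. Qed.

Lemma dotDr u v w : dot u (v + w) = dot u v + dot u w.
Proof.
by rewrite /dot -big_split; apply: eq_bigr => i _; rewrite !mxE mulrDr.
Qed.

Lemma dotZr a u v : dot u (a *: v) = a * dot u v.
Proof. by rewrite /dot mulr_sumr; apply: eq_bigr => i _; rewrite !mxE mulrCA. Qed.

Lemma dotNr u v : dot u (- v) = - dot u v.
Proof. by rewrite -scaleN1r dotZr mulN1r. Qed.

Lemma dotBr u v w : dot u (v - w) = dot u v - dot u w.
Proof. by rewrite dotDr dotNr. Qed.

Lemma dotZl a u v : dot (a *: v) u = a * dot v u.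
Proof. by rewrite dotC dotZr dotC. Qed.

Lemma dotBl u v w : dot (v - w) u = dot v u - dot w u.
Proof. by rewrite dotC dotBr !(dotC u). Qed.

Lemma dot0r u : dot u 0 = 0.
Proof. by rewrite -(scale0r 0) dotZr mul0r. Qed.

Lemma dot_sumr m u (c : 'I_m -> R) (v : 'I_m -> 'rV[R]_n) :
  dot u (\sum_j c j *: v j) = \sum_j c j * dot u (v j).
Proof.
elim/big_rec2: _ => [|j a b _ <-]; first by rewrite dot0r.
by rewrite dotDr dotZr.
Qed.

Lemma dot_ge0 u : 0 <= dot u u.
Proof. by rewrite sumr_ge0 // => i _; rewrite -expr2 sqr_ge0. Qed.

Lemma dot_eq0 u : (dot u u == 0) = (u == 0).
Proof.
apply/idP/eqP => [|->]; last by rewrite dot0r.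
rewrite psumr_eq0 => [/allP u0|i _]; last by rewrite -expr2 sqr_ge0.
apply/rowP => i; rewrite mxE; have := u0 i (mem_index_enum _).
by rewrite -expr2 sqrf_eq0 => /eqP.
Qed.

Lemma dot_gt0 u : (0 < dot u u) = (u != 0).
Proof. by rewrite lt_def dot_ge0 andbT dot_eq0. Qed.

End InnerProduct.

Section NormalCone.
Context {R : realType} {n : nat}.
Implicit Types (C K T H : set 'rV[R]_n) (u v w x z : 'rV[R]_n).

Lemma normal_cone_dot_gt0 C z v :
  interior C 0 -> normal_cone C z v -> v != 0 -> 0 < dot v z.
Proof.
move=> /nbhs_ballP [e e0 ballC] Nv v0.
pose k := e / (2 * (`|v| + 1)).
have k0 : 0 < k by rewrite divr_gt0 // mulr_gt0 // ltr_wpDl.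
have Ck : C (k *: v).
  apply: ballC; rewrite -ball_normE /ball_ /= sub0r normrN normrZ (gtr0_norm k0).
  rewrite /k mulrAC ltr_pdivrMr ?mulr_gt0 ?ltr_wpDl // ltr_pM2l //.
  by have := normr_ge0 v; lra.
have := Nv _ Ck; rewrite dotBr dotZr subr_le0; apply: lt_le_trans.
by rewrite mulr_gt0 // dot_gt0.
Qed.

(* A hyperplane {<v1, .> = c1} contained in a hyperplane {<v2, .> = c2}
   forces v2 to be a multiple of v1: test on z1 + (v2 - k v1) with
   v2 - k v1 orthogonal to v1. *)
Lemma hyperplane_sub_collinear v1 v2 z1 z2 : v1 != 0 ->
  (forall x, dot v1 x = dot v1 z1 -> dot v2 x = dot v2 z2) ->
  exists c, v2 = c *: v1.
Proof.
move=> v10 sub12.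
have d0 : dot v1 v1 != 0 by rewrite dot_eq0.
pose k := dot v1 v2 / dot v1 v1; pose w := v2 - k *: v1.
have v1w : dot v1 w = 0 by rewrite dotBr dotZr mulfVK // subrr.
have v2z : dot v2 z1 = dot v2 z2 by apply: sub12.
have v2w : dot v2 w = 0.
  have := sub12 (z1 + w).
  rewrite (dotDr v1 z1 w) (dotDr v2 z1 w) v1w addr0 v2z => /(_ erefl) /eqP.
  by rewrite addrC -subr_eq0 addrK => /eqP.
exists k; apply/eqP; rewrite -subr_eq0 -/w -dot_eq0.
by rewrite {1}/w dotBl dotZl v1w v2w mulr0 subr0.
Qed.

Lemma normal_cone_supporting_hyperplane C z v : normal_cone C z v -> v != 0 ->
  supporting_hyperplane C z [set x | dot v x = dot v z].
Proof.
by move=> Nv v0; exists v; split=> // y /Nv; rewrite dotBr subr_le0.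
Qed.

Lemma outer_unit_normal_neq0 K z H v : outer_unit_normal_to K z H v -> v != 0.
Proof. by case=> vv _ _; rewrite -dot_eq0 vv oner_neq0. Qed.

Lemma outer_unit_normal_unique K z H v1 v2 : interior K 0 ->
  outer_unit_normal_to K z H v1 -> outer_unit_normal_to K z H v2 -> v1 = v2.
Proof.
move=> K0 v1_normal v2_normal.
have v10 := outer_unit_normal_neq0 v1_normal.
have v20 := outer_unit_normal_neq0 v2_normal.
move: v1_normal v2_normal => [v1v1 Nv1 ->] [v2v2 Nv2 H12].
have [c v2E] : exists c, v2 = c *: v1.
  apply: (hyperplane_sub_collinear (z1:=z) (z2:=z) v10) => x /eqP.
  rewrite -subr_eq0 -dotBr => /eqP v1x.
  have : [set x | dot v1 (x - z) = 0] x by exact: v1x.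
  by rewrite H12 /= dotBr => /eqP; rewrite subr_eq0 => /eqP.
have c0 : 0 < c.
  have := normal_cone_dot_gt0 K0 Nv2 v20.
  by rewrite v2E dotZl pmulr_lgt0 // (normal_cone_dot_gt0 K0 Nv1 v10).
move: v2v2; rewrite v2E dotZl dotZr v1v1 mulr1 => cc.
have -> : c = 1 by nra.
by rewrite scale1r.
Qed.

Lemma smooth_normal_cone_collinear T z w1 w2 :
  smooth_body T -> interior T 0 -> bd T z ->
  normal_cone T z w1 -> normal_cone T z w2 -> w1 != 0 -> w2 != 0 ->
  exists2 c, 0 < c & w2 = c *: w1.
Proof.
move=> smoothT T0 bdz N1 N2 w10 w20.
have H12 := smoothT _ bdz _ _ (normal_cone_supporting_hyperplane N1 w10)
                               (normal_cone_supporting_hyperplane N2 w20).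
have [c w2E] : exists c, w2 = c *: w1.
  apply: (hyperplane_sub_collinear (z1:=z) (z2:=z) w10) => x x1.
  have : [set x | dot w1 x = dot w1 z] x by exact: x1.
  by rewrite H12.
exists c => //; have := normal_cone_dot_gt0 T0 N2 w20.
by rewrite w2E dotZl pmulr_lgt0 // (normal_cone_dot_gt0 T0 N1 w10).
Qed.

Lemma segment_of_collinear (a b c : 'rV[R]_n) (k : R) :
  0 < k -> c - b = k *: (b - a) -> segment a c b.
Proof.
move=> k0 cE; have k1 : 0 < 1 + k by lra.
exists (k / (1 + k)).
  by rewrite /= divr_ge0 ?ler_pdivrMr ?(ltW k0) ?(ltW k1) //= mul1r lerDr ler01.
have -> : c = k *: (b - a) + b by rewrite -cE subrK.
have e1 : (1 - k / (1 + k)) * k = k / (1 + k) by field; rewrite gt_eqF.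
rewrite scalerDr scalerA e1 scalerBr addrA [_ *: a + _]addrC subrK.
by rewrite -scalerDl addrC subrK scale1r.
Qed.

End NormalCone.

Lemma trmx_mulmx_self_eq0 {R : realDomainType} p q (A : 'M[R]_(p, q)) :
  A^T *m A = 0 -> A = 0.
Proof.
move=> AA0; apply/matrixP => i j; rewrite mxE.
have : (A^T *m A) j j = 0 by rewrite AA0 mxE.
rewrite mxE => /eqP; rewrite psumr_eq0 => [/allP A0|k _]; last first.
  by rewrite mxE -expr2 sqr_ge0.
by have := A0 i (mem_index_enum _); rewrite mxE -expr2 sqrf_eq0 => /eqP.
Qed.

Section Span.
Context {R : realType} {n m : nat} (v : 'I_m -> 'rV[R]_n).
Implicit Types (x y : 'rV[R]_n) (c mu : 'I_m -> R).

Lemma span_of_sum c : span_of v (\sum_i c i *: v i).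
Proof. by exists c. Qed.

Lemma span_of_gen j : span_of v (v j).
Proof.
exists (fun i => (i == j)%:R) => //.
rewrite (bigD1 j) //= eqxx scale1r big1 ?addr0 // => i /negbTE ->.
by rewrite scale0r.
Qed.

Lemma span_ofB x y : span_of v x -> span_of v y -> span_of v (x - y).
Proof.
move=> [c _ <-] [d _ <-]; exists (fun i => c i - d i) => //.
by rewrite -sumrB; apply: eq_bigr => i _; rewrite scalerBl.
Qed.

Lemma orth_compl_span_of x :
  (forall j, dot x (v j) = 0) -> orth_compl (span_of v) x.
Proof.
by move=> xv _ [c _ <-]; rewrite dot_sumr big1 // => i _; rewrite xv mulr0.
Qed.

Lemma span_of_orth_eq0 x : span_of v x -> (forall j, dot x (v j) = 0) -> x = 0.
Proof.
by move=> vx /orth_compl_span_of/(_ x vx) /eqP; rewrite dot_eq0 => /eqP.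
Qed.

(* The orthogonal projection onto span v, with coefficients linear in the
   products <v k, x>: P is a pseudo-inverse of the Gram matrix of v. *)
Lemma span_of_projection : exists P : 'M[R]_m, forall x j,
  dot (v j) (x - \sum_i (\sum_k dot (v k) x * P k i) *: v i) = 0.
Proof.
pose N : 'M[R]_(m, n) := \matrix_(j, i) v j 0 i.
pose G := N *m N^T.
exists (pinvmx G) => x j.
have NC : N^T *m cokermx G = 0.
  apply: trmx_mulmx_self_eq0.
  by rewrite trmx_mul trmxK mulmxA -(mulmxA _ N) -/G -mulmxA mulmx_coker mulmx0.
pose y := x *m N^T.
have yG : (y <= G)%MS by rewrite submxE /y -mulmxA NC mulmx0.
set c := y *m pinvmx G.
have -> : \sum_i (\sum_k dot (v k) x * pinvmx G k i) *: v i = c *m N.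
  rewrite mulmx_sum_row; apply: eq_bigr => i _.
  have -> : row i N = v i by apply/rowP => l; rewrite !mxE.
  congr (_ *: _); rewrite /c mxE; apply: eq_bigr => k _.
  rewrite /y mxE dotC; congr (_ * _); rewrite /dot [RHS]mxE.
  by apply: eq_bigr => l _; rewrite !mxE.
have : ((x - c *m N) *m N^T) 0 j = 0.
  by rewrite mulmxBl -mulmxA -/G mulmxKpV // subrr mxE.
by rewrite mxE => <-; rewrite dotC; apply: eq_bigr => l _; rewrite !mxE.
Qed.

Lemma level_set_decomposition (Pr : R -> Prop) j z :
  [set x | Pr (dot (v j) (x - z))] =
  mink_sum ([set x | Pr (dot (v j) (x - z))] `&` span_of v)
           (orth_compl (span_of v)).
Proof.
have [P projP] := span_of_projection.
apply/seteqP; split => x /=.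
  move=> Prx; have projx j' := projP x j'.
  set u := \sum_i _ in projx.
  exists u; last exists (x - u); last by rewrite addrC subrK.
    split; last exact: span_of_sum.
    change (Pr (dot (v j) (u - z))).
    have -> : u - z = (x - z) - (x - u).
      by rewrite opprB addrCA addrAC subrr add0r.
    by rewrite dotBr projx subr0.
  by apply: orth_compl_span_of => i; rewrite dotC projx.
move=> [a [Pra span_a] [b orth_b <-]].
by rewrite /= addrAC dotDr (dotC (v j) b) (orth_b _ (span_of_gen j)) addr0.
Qed.

Lemma bounded_in_span_of (A : set 'rV[R]_n) (Y : R) : A `<=` span_of v ->
  (forall x, A x -> forall i, `|dot (v i) x| <= Y) -> bounded_in (span_of v) A.
Proof.
move=> A_span A_dot; split=> //.
have [P projP] := span_of_projection.
exists (\sum_i \sum_k Y * `|P k i| * Y) => x Ax.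
have xE : x = \sum_i (\sum_k dot (v k) x * P k i) *: v i.
  apply/eqP; rewrite -subr_eq0; apply/eqP.
  apply: span_of_orth_eq0; first exact: span_ofB (A_span _ Ax) (span_of_sum _).
  by move=> j; rewrite dotC projP.
have -> : dot x x = \sum_i \sum_k dot (v k) x * P k i * dot (v i) x.
  rewrite {2}xE dot_sumr; apply: eq_bigr => i _.
  by rewrite mulr_suml; apply: eq_bigr => k _; rewrite (dotC x).
apply: ler_sum => i _; apply: ler_sum => k _.
apply: le_trans (ler_norm _) _; rewrite !normrM.
apply: ler_pM; rewrite ?mulr_ge0 ?A_dot //.
by apply: ler_wpM2r; rewrite ?A_dot.
Qed.

Lemma span_of_eq_cone_of mu : (forall j, 0 < mu j) -> \sum_j mu j *: v j = 0 ->
  span_of v = cone_of v.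
Proof.
move=> mu_gt0 balanced; apply/seteqP; split=> _ [c _ <-]; last first.
  exact: span_of_sum.
pose t := \sum_i `|c i| / mu i.
exists (fun i => c i + t * mu i).
  move=> i /=; have : `|c i| / mu i <= t.
    by rewrite /t (bigD1 i) //= lerDl sumr_ge0 // => k _; rewrite divr_ge0 // ltW.
  rewrite ler_pdivrMr // => ci_le.
  by have := ler_norm (- c i); rewrite normrN; lra.
under eq_bigr => i _ do rewrite scalerDl -scalerA.
by rewrite big_split /= -scaler_sumr balanced scaler0 addr0.
Qed.

End Span.

Section BalancedHalfspaces.
Context {R : realType} {n m : nat} (v q : 'I_m -> 'rV[R]_n) (mu : 'I_m -> R).
Hypothesis mu_ge0 : forall j, 0 <= mu j.
Hypothesis balanced : \sum_j mu j *: v j = 0.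

Let lower j := - (\sum_(i | i != j) mu i * dot (v i) (q i)) / mu j.

Lemma balanced_dot_bounds j x : 0 < mu j ->
  (forall i, dot (v i) (x - q i) <= 0) ->
  lower j <= dot (v j) x <= dot (v j) (q j).
Proof.
move=> mu_j x_half.
have x_le i : dot (v i) x <= dot (v i) (q i) by rewrite -subr_le0 -dotBr.
rewrite x_le andbT /lower ler_pdivrMr //.
have : \sum_i mu i * dot (v i) x = 0.
  rewrite -[RHS](dot0r x) -balanced dot_sumr.
  by apply: eq_bigr => i _; rewrite dotC.
rewrite (bigD1 j) //= => sum0.
have : \sum_(i | i != j) mu i * dot (v i) x <=
       \sum_(i | i != j) mu i * dot (v i) (q i).
  by apply: ler_sum => i _; rewrite ler_wpM2l.
move: sum0; set s1 := \sum_(i | _) _; set s2 := \sum_(i | _) _ => sum0 s12.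
by rewrite mulrC; lra.
Qed.

Lemma nearly_bounded_in_balanced (U A : set 'rV[R]_n) j :
  0 < mu j -> v j != 0 -> U (v j) -> A `<=` U ->
  (forall x, A x -> forall i, dot (v i) (x - q i) <= 0) -> nearly_bounded_in U A.
Proof.
move=> mu_j vj0 U_vj AU A_half; split=> //.
exists (v j), (lower j), (dot (v j) (q j)); split=> // x Ax.
exact: balanced_dot_bounds mu_j (A_half x Ax).
Qed.

Lemma bounded_in_balanced (A : set 'rV[R]_n) : (forall j, 0 < mu j) ->
  A `<=` span_of v -> (forall x, A x -> forall i, dot (v i) (x - q i) <= 0) ->
  bounded_in (span_of v) A.
Proof.
move=> mu_gt0 A_span A_half.
pose Y := \sum_i (`|lower i| + `|dot (v i) (q i)|).
apply: (bounded_in_span_of (Y := Y)) => // x Ax i.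
have /andP [lower_x x_upper] := balanced_dot_bounds (mu_gt0 i) (A_half x Ax).
apply: (@le_trans _ _ (`|lower i| + `|dot (v i) (q i)|)); last first.
  by rewrite /Y (bigD1 i) //= lerDl sumr_ge0.
have := ler_norm (dot (v i) (q i)); have := ler_norm (- lower i); rewrite normrN.
have := normr_ge0 (lower i); have := normr_ge0 (dot (v i) (q i)).
by rewrite ler_norml => *; apply/andP; split; lra.
Qed.

End BalancedHalfspaces.

Lemma sum_ordS (V : zmodType) m (F : 'I_m -> V) : \sum_j F (ordS j) = \sum_j F j.
Proof. by rewrite [RHS](reindex_inj (@ordS_inj m)). Qed.

Section ClosedBilliardLoop.
Context {R : realType} {n m : nat} (T : set 'rV[R]_n) (q p w : 'I_m -> 'rV[R]_n).
Context (mu : 'I_m -> R).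
Hypothesis T0 : interior T 0.
Hypothesis q_closed : closed_polygonal_curve q.
Hypothesis mu_ge0 : forall j, 0 <= mu j.
Hypothesis NT : forall j, normal_cone T (p j) (q (ordS j) - q j).
Hypothesis p_step : forall j, p (ordS j) - p j = - (mu (ordS j) *: w (ordS j)).

Lemma closed_curve_edge_neq0 j : q (ordS j) - q j != 0.
Proof. by rewrite subr_eq0 eq_sym; have [] := q_closed.2 j. Qed.

Lemma billiard_balanced : \sum_j mu j *: w j = 0.
Proof.
apply/eqP; rewrite -oppr_eq0 -sumrN -(sum_ordS (fun j => - (mu j *: w j))) /=.
under eq_bigr do rewrite -p_step.
by rewrite sumrB sum_ordS subrr.
Qed.

Lemma billiard_exists_mu_gt0 : exists j, 0 < mu j.
Proof.
apply: contrapT => /forallNP mu_le0.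
have mu0 j : mu j = 0 by apply/eqP; rewrite eq_le mu_ge0 andbT leNgt; apply/negP.
have p_const j : p (ordS j) = p j.
  by apply/eqP; rewrite -subr_eq0 p_step mu0 scale0r oppr0.
have edge_gt0 j : 0 < dot (q (ordS j) - q j) (p j).
  exact: normal_cone_dot_gt0 T0 (NT j) (closed_curve_edge_neq0 j).
have : \sum_j dot (q (ordS j) - q j) (p j) = 0.
  under eq_bigr do rewrite dotBl.
  rewrite sumrB; under eq_bigr do rewrite -p_const.
  by rewrite (sum_ordS (fun j => dot (q j) (p j))) subrr.
move/(psumr_eq0P (fun j _ => ltW (edge_gt0 j))) => edge0.
have m_gt0 : (0 < m)%N := leq_trans (isT : (0 < 2)%N) q_closed.1.
by have := edge_gt0 (Ordinal m_gt0); rewrite edge0 ?ltxx.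
Qed.

Lemma billiard_smooth_mu_gt0 : smooth_body T -> (forall j, bd T (p j)) ->
  forall j, 0 < mu j.
Proof.
move=> smoothT bdp j; rewrite lt_def mu_ge0 andbT; apply/eqP => mu0.
pose i := ord_pred j; have Si : ordS i = j := ord_predK j.
have p_ij : p j = p i.
  have := p_step i; rewrite Si mu0 scale0r oppr0 => /eqP.
  by rewrite subr_eq0 => /eqP.
have Ni := NT i; have ei := closed_curve_edge_neq0 i.
have Nj := NT j; rewrite Si in Ni ei; rewrite p_ij in Nj.
have [c c0 edgeE] := smooth_normal_cone_collinear smoothT T0 (bdp i) Ni Nj ei
  (closed_curve_edge_neq0 j).
have [_] := q_closed.2 j; apply.
exact: segment_of_collinear c0 edgeE.
Qed.

End ClosedBilliardLoop.

Lemma minkowski_billiard_balanced {R : realType} {n m : nat}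
    (K T : set 'rV[R]_n) (q : 'I_m -> 'rV[R]_n) (H : 'I_m -> set 'rV[R]_n)
    (nK : 'I_m -> 'rV[R]_n) :
  convex_body K -> convex_body T -> minkowski_billiard_trajectory K T q H ->
  (forall j, outer_unit_normal_to K (q j) (H j) (nK j)) ->
  exists mu : 'I_m -> R,
    [/\ forall j, 0 <= mu j, \sum_j mu j *: nK j = 0, exists j, 0 < mu j &
        smooth_body T -> forall j, 0 < mu j].
Proof.
move=> [_ _ K0] [_ _ T0] [q_closed _ _ [p [w [mu traj]]]] nK_normal.
have w_nK j : w j = nK j.
  have [_ w_normal _ _ _] := traj j.
  exact: outer_unit_normal_unique K0 w_normal (nK_normal j).
have mu_ge0 j : 0 <= mu j by have [] := traj j.
have NT j : normal_cone T (p j) (q (ordS j) - q j) by have [] := traj j.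
have bdp j : bd T (p j) by have [] := traj j.
have p_step j : p (ordS j) - p j = - (mu (ordS j) *: nK (ordS j)).
  by have [_ _ _ _ ->] := traj j; rewrite w_nK.
exists mu; split=> //.
- exact: billiard_balanced p_step.
- exact: billiard_exists_mu_gt0 T0 q_closed mu_ge0 NT p_step.
- move=> smoothT.
  exact: billiard_smooth_mu_gt0 T0 q_closed mu_ge0 NT p_step smoothT bdp.
Qed.

Theorem proposition3p8 (R : realType) (n m : nat)
    (K T : set 'rV[R]_n) (q : 'I_m -> 'rV[R]_n) (H : 'I_m -> set 'rV[R]_n) :
  convex_body K -> convex_body T ->
  minkowski_billiard_trajectory K T q H ->
  forall nK : 'I_m -> 'rV[R]_n,
    (forall j, outer_unit_normal_to K (q j) (H j) (nK j)) ->
    let U := span_of nK in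
    let W := orth_compl U in
    let Hplus := fun j : 'I_m => [set x | dot (nK j) (x - q j) <= 0] in
    [/\ forall j, H j = mink_sum (H j `&` U) W,
        forall j, Hplus j = mink_sum (Hplus j `&` U) W,
        nearly_bounded_in U (\bigcap_j (Hplus j `&` U)),
        nearly_bounded_in setT (\bigcap_j Hplus j) &
        smooth_body T ->
          [/\ U = cone_of nK,
              bounded_in U (\bigcap_j (Hplus j `&` U)) &
              nearly_bounded_in setT (\bigcap_j Hplus j)]].
Proof.
move=> convK convT traj nK nK_normal U W Hplus.
have [mu [mu_ge0 balanced [j0 mu_j0] smooth_mu_gt0]] :=
  minkowski_billiard_balanced convK convT traj nK_normal.
have nK_j0 := outer_unit_normal_neq0 (nK_normal j0).
have capU_sub : \bigcap_j (Hplus j `&` U) `<=` U by move=> x /(_ j0 I) [].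
have capU_half x : (\bigcap_j (Hplus j `&` U)) x ->
    forall i, dot (nK i) (x - q i) <= 0.
  by move=> x_cap i; have [] := x_cap i I.
have nearly_bounded_cap : nearly_bounded_in setT (\bigcap_j Hplus j).
  apply: (nearly_bounded_in_balanced mu_ge0 balanced mu_j0 nK_j0) => // x x_cap i.
  exact: x_cap i I.
split=> //.
- move=> j; have [_ _ ->] := nK_normal j.
  exact: (level_set_decomposition nK (fun r => r = 0)).
- by move=> j; exact: (level_set_decomposition nK (fun r => r <= 0)).
- apply: (nearly_bounded_in_balanced mu_ge0 balanced mu_j0 nK_j0).
  + exact: span_of_gen.
  + exact: capU_sub.
  + exact: capU_half.
move=> /smooth_mu_gt0 mu_gt0; split=> //.
  exact: span_of_eq_cone_of mu_gt0 balanced.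
apply: (bounded_in_balanced mu_ge0 balanced mu_gt0).
- exact: capU_sub.
- exact: capU_half.
Qed.
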